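(* Let $r,r'$ be behaviors with $r\simeq r'$ and $r'$ fork-free (the constructor $\mathrm{fork}$ does not occur in $r'$). Then $\mathcal C(\partial_w r)\sqsubseteq\varepsilon$ for every $w\in\Sigma^*$.
   Context: Let $\Sigma$ be a finite alphabet. Behaviors are the terms generated by $r,s ::= \phi \mid \varepsilon \mid x\ (x\in\Sigma) \mid r+s \mid r\cdot s \mid r^* \mid \mathrm{fork}(r)$. For words $v,w\in\Sigma^*$ the shuffle $v\| w\subseteq \Sigma^*$ is defined by $\varepsilon\|w=\{w\}$, $v\|\varepsilon=\{v\}$, $xv\|yw=\{x\}\cdot(v\|yw)\cup\{y\}\cdot(xv\|w)$ for $x,y\in\Sigma$, and it is lifted to languages by $L\|M=\bigcup_{v\in L,w\in M} v\|w$; $L\cdot M$ denotes concatenation of languages. For $K\subseteq\Sigma^*$ the trace language $L(r,K)\subseteq\Sigma^*$ is defined by structural recursion: $L(\phi,K)=\emptyset$, $L(\varepsilon,K)=K$, $L(x,K)=\{x\}\cdot K$, $L(r+s,K)=L(r,K)\cup L(s,K)$, $L(r\cdot s,K)=L(r,L(s,K))$, $L(r^*,K)$ is the least fixpoint (w.r.t. $\subseteq$) of the monotone map $X\mapsto L(r,X)\cup K$, and $L(\mathrm{fork}(r),K)=L(r)\|K$, where $L(r)=L(r,\{\varepsilon\})$. Semantic containment: $r\sqsubseteq s$ iff $L(r,K)\subseteq L(s,K)$ for all $K\subseteq\Sigma^*$. The concurrent part $\mathcal C(r)$ is the behavior defined by: $\mathcal C(\phi)=\phi$, $\mathcal C(\varepsilon)=\varepsilon$,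 $\mathcal C(x)=\phi$, $\mathcal C(r+s)=\mathcal C(r)+\mathcal C(s)$, $\mathcal C(r\cdot s)=\mathcal C(r)\cdot\mathcal C(s)$, $\mathcal C(r^* )=\mathcal C(r)^*$, $\mathcal C(\mathrm{fork}(r))=\mathrm{fork}(r)$. The derivative $\partial_x r$ of a behavior $r$ by $x\in\Sigma$ is the behavior defined by: $\partial_x\phi=\phi$, $\partial_x\varepsilon=\phi$, $\partial_x y=\varepsilon$ if $y=x$ and $\phi$ otherwise, $\partial_x(r+s)=\partial_x r+\partial_x s$, $\partial_x(r\cdot s)=\partial_x r\cdot s+\mathcal C(r)\cdot\partial_x s$, $\partial_x(r^* )=\partial_x r\cdot r^*$, $\partial_x(\mathrm{fork}(r))=\mathrm{fork}(\partial_x r)$. It is extended to words by $\partial_\varepsilon r=r$ and $\partial_{xw}r=\partial_w(\partial_x r)$ for $x\in\Sigma$, $w\in\Sigma^*$. Similarity $\simeq$ is the smallest relation on behaviors that is reflexive, symmetric, transitive, closed under contexts (if $s\simeq t$ then $E[s]\simeq E[t]$ for every context $E ::= [\,] \mid E^* \mid E\cdot s \mid r\cdot E \mid E+s \mid r+E \mid \mathrm{fork}(E)$, where $E[t]$ replaces the hole by $t$), and contains the axioms $r+(s+t)\simeq(r+s)+t$, $r+s\simeq s+r$, $r+r\simeq r$, $r+\phi\simeq r$, $\phi+r\simeq r$, $\varepsilon\cdot r\simeq r$, $r\cdot\varepsilon\simeq r$, $\varepsilon^*\simeq\varepsilon$, $\mathrm{fork}(\varepsilon)\simeq\varepsilon$,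 $\phi\cdot r\simeq\phi$, $r\cdot\phi\simeq\phi$, $\phi^*\simeq\varepsilon$, $\mathrm{fork}(\phi)\simeq\phi$. *)

From mathcomp Require Import all_boot.
Set Implicit Arguments.
Unset Strict Implicit.
Unset Printing Implicit Defensive.

Section Behaviors.
Variable Sigma : finType.

Inductive behavior : Type :=
| Phi : behavior
| Eps : behavior
| Sym : Sigma -> behavior
| Plus : behavior -> behavior -> behavior
| Cat : behavior -> behavior -> behavior
| Star : behavior -> behavior
| Fork : behavior -> behavior.

Definition lang := seq Sigma -> Prop.

Definition lang_sub (L M : lang) : Prop := forall w, L w -> M w.
Definition lang_union (L M : lang) : lang := fun w => L w \/ M w.
Definition lang_empty : lang := fun _ => False.
Definition lang_eps : lang := fun w => w = [::].
Definition lang_prefix (x : Sigma) (K : lang) : lang :=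
  fun w => exists2 u, K u & w = x :: u.

(* shuffle of words: shuffle v w u  <->  u \in v || w, following the
   recursive clauses of the definition *)
Inductive shuffle : seq Sigma -> seq Sigma -> seq Sigma -> Prop :=
| shuffle_nil_l w : shuffle [::] w w
| shuffle_nil_r v : shuffle v [::] v
| shuffle_left x y v w u :
    shuffle v (y :: w) u -> shuffle (x :: v) (y :: w) (x :: u)
| shuffle_right x y v w u :
    shuffle (x :: v) w u -> shuffle (x :: v) (y :: w) (y :: u).

Definition lang_shuffle (L M : lang) : lang :=
  fun u => exists v w, [/\ L v, M w & shuffle v w u].

(* least fixpoint (w.r.t. inclusion) of a map on languages:
   intersection of all prefixpoints (Knaster-Tarski) *)
Definition lfp (F : lang -> lang) : lang :=
  fun w => forall X : lang, lang_sub (F X) X -> X w.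

Fixpoint L (r : behavior) (K : lang) {struct r} : lang :=
  match r with
  | Phi => lang_empty
  | Eps => K
  | Sym x => lang_prefix x K
  | Plus r s => lang_union (L r K) (L s K)
  | Cat r s => L r (L s K)
  | Star r => lfp (fun X => lang_union (L r X) K)
  | Fork r => lang_shuffle (L r lang_eps) K
  end.

Definition contained (r s : behavior) : Prop :=
  forall K : lang, lang_sub (L r K) (L s K).

Fixpoint conc (r : behavior) : behavior :=
  match r with
  | Phi => Phi
  | Eps => Eps
  | Sym _ => Phi
  | Plus r s => Plus (conc r) (conc s)
  | Cat r s => Cat (conc r) (conc s)
  | Star r => Star (conc r)
  | Fork r => Fork r
  end.

Fixpoint deriv (x : Sigma) (r : behavior) : behavior :=
  match r with
  | Phi => Phi
  | Eps => Phi
  | Sym y => if y == x then Eps else Phi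
  | Plus r s => Plus (deriv x r) (deriv x s)
  | Cat r s => Plus (Cat (deriv x r) s) (Cat (conc r) (deriv x s))
  | Star r => Cat (deriv x r) (Star r)
  | Fork r => Fork (deriv x r)
  end.

Fixpoint deriv_word (w : seq Sigma) (r : behavior) : behavior :=
  match w with
  | [::] => r
  | x :: w' => deriv_word w' (deriv x r)
  end.

Inductive context : Type :=
| Hole : context
| CStar : context -> context
| CCatL : context -> behavior -> context
| CCatR : behavior -> context -> context
| CPlusL : context -> behavior -> context
| CPlusR : behavior -> context -> context
| CFork : context -> context.

Fixpoint plug (E : context) (t : behavior) : behavior :=
  match E with
  | Hole => t
  | CStar E => Star (plug E t)
  | CCatL E s => Cat (plug E t) s
  | CCatR r E => Cat r (plug E t)
  | CPlusL E s => Plus (plug E t) s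
  | CPlusR r E => Plus r (plug E t)
  | CFork E => Fork (plug E t)
  end.

Inductive sim : behavior -> behavior -> Prop :=
| sim_refl r : sim r r
| sim_sym r s : sim r s -> sim s r
| sim_trans r s t : sim r s -> sim s t -> sim r t
| sim_ctx E s t : sim s t -> sim (plug E s) (plug E t)
| sim_plusA r s t : sim (Plus r (Plus s t)) (Plus (Plus r s) t)
| sim_plusC r s : sim (Plus r s) (Plus s r)
| sim_plusI r : sim (Plus r r) r
| sim_plus0r r : sim (Plus r Phi) r
| sim_plus0l r : sim (Plus Phi r) r
| sim_cat1l r : sim (Cat Eps r) r
| sim_cat1r r : sim (Cat r Eps) r
| sim_star1 : sim (Star Eps) Eps
| sim_fork1 : sim (Fork Eps) Eps
| sim_cat0l r : sim (Cat Phi r) Phi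
| sim_cat0r r : sim (Cat r Phi) Phi
| sim_star0 : sim (Star Phi) Eps
| sim_fork0 : sim (Fork Phi) Phi.

Fixpoint fork_free (r : behavior) : bool :=
  match r with
  | Phi | Eps | Sym _ => true
  | Plus r s | Cat r s => fork_free r && fork_free s
  | Star r => fork_free r
  | Fork _ => false
  end.

End Behaviors.

(* Similarity is sound for the trace semantics and commutes with derivatives
   and concurrent parts up to similarity, so C(∂_w r) ≃ C(∂_w r'), whose
   languages coincide.  Derivatives and concurrent parts of the fork-free r'
   are fork-free, and the concurrent part of a fork-free behavior is built
   from φ and ε only, so its language L(C(s), K) is contained in K. *)
From mathcomp Require Import all_boot.

Section Behaviors.
Context {Sigma : finType}.
Notation behavior := (behavior Sigma).
Notation Hole := (Hole Sigma).

Local Hint Resolve sim_refl : core.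

Lemma sim_Plus {r r' s s' : behavior} :
  sim r r' -> sim s s' -> sim (Plus r s) (Plus r' s').
Proof.
move=> rr' ss'; apply: (sim_trans (sim_ctx (CPlusL Hole s) rr')).
exact: (sim_ctx (CPlusR r' Hole) ss').
Qed.

Lemma sim_Cat {r r' s s' : behavior} :
  sim r r' -> sim s s' -> sim (Cat r s) (Cat r' s').
Proof.
move=> rr' ss'; apply: (sim_trans (sim_ctx (CCatL Hole s) rr')).
exact: (sim_ctx (CCatR r' Hole) ss').
Qed.

Lemma sim_Star {r r' : behavior} : sim r r' -> sim (Star r) (Star r').
Proof. exact: (sim_ctx (CStar Hole)). Qed.

Lemma sim_Fork {r r' : behavior} : sim r r' -> sim (Fork r) (Fork r').
Proof. exact: (sim_ctx (CFork Hole)). Qed.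

Lemma sim_conc {s t : behavior} : sim s t -> sim (conc s) (conc t).
Proof.
elim=> {s t}; rewrite //=; try by constructor.
- by move=> r s t _ rs _; apply: sim_trans.
- move=> E s t st IH.
  elim: E => [|E IHE|E IHE q|q E IHE|E IHE q|q E IHE|E _] //=.
  + exact: sim_Star.
  + exact: sim_Cat.
  + exact: sim_Cat.
  + exact: sim_Plus.
  + exact: sim_Plus.
  + exact: sim_Fork (sim_ctx E st).
Qed.

Lemma sim_deriv (x : Sigma) {s t : behavior} :
  sim s t -> sim (deriv x s) (deriv x t).
Proof.
elim=> {s t}; rewrite /=; try by constructor.
- by move=> r s t _ rs _; apply: sim_trans.
- move=> E s t st IH.
  elim: E => [|E IHE|E IHE q|q E IHE|E IHE q|q E IHE|E IHE] //=.
  + exact: sim_Cat IHE (sim_Star (sim_ctx E st)).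
  + exact: sim_Plus (sim_Cat IHE _) (sim_Cat (sim_conc (sim_ctx E st)) _).
  + exact: sim_Plus (sim_Cat _ (sim_ctx E st)) (sim_Cat _ IHE).
  + exact: sim_Plus.
  + exact: sim_Plus.
  + exact: sim_Fork.
- move=> r; apply: sim_trans (sim_plus0l _).
  exact: sim_Plus (sim_cat0l _) (sim_cat1l _).
- move=> r; apply: sim_trans (sim_plus0r _).
  exact: sim_Plus (sim_cat1r _) (sim_cat0r _).
- move=> r; apply: sim_trans (sim_plus0l _).
  exact: sim_Plus (sim_cat0l _) (sim_cat0l _).
- move=> r; apply: sim_trans (sim_plus0l _).
  exact: sim_Plus (sim_cat0r _) (sim_cat0r _).
Qed.

Lemma sim_deriv_word (w : seq Sigma) {s t : behavior} :
  sim s t -> sim (deriv_word w s) (deriv_word w t).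
Proof. by elim: w s t => //= x w IH s t /(sim_deriv x); apply: IH. Qed.

Lemma fork_free_conc {r : behavior} : fork_free r -> fork_free (conc r).
Proof. by elim: r => //= r IHr s IHs /andP[/IHr-> /IHs->]. Qed.

Lemma fork_free_deriv (x : Sigma) {r : behavior} :
  fork_free r -> fork_free (deriv x r).
Proof.
elim: r => //= [y|r IHr s IHs|r IHr s IHs|r IHr].
- by case: (y == x).
- by case/andP=> /IHr-> /IHs->.
- by case/andP=> fr fs; rewrite IHr // fs fork_free_conc // IHs.
- by move=> fr; rewrite IHr.
Qed.

Lemma fork_free_deriv_word (w : seq Sigma) {r : behavior} :
  fork_free r -> fork_free (deriv_word w r).
Proof. by elim: w r => //= x w IH r /(fork_free_deriv x); apply: IH. Qed.

Lemma L_mono (r : behavior) {K K' : lang Sigma} :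
  lang_sub K K' -> lang_sub (L r K) (L r K').
Proof.
elim: r K K' => [||y|r IHr s IHs|r IHr s IHs|r IHr|r IHr] K K' KK' w //=.
- exact: KK'.
- by case=> u Ku ->; exists u => //; apply: KK'.
- by case=> [/(IHr _ _ KK')|/(IHs _ _ KK')]; [left|right].
- by apply: IHr; apply: IHs.
- move=> Hw X FX; apply: Hw => v [Hv|/KK' Kv]; apply: FX; [left|right] => //.
- by case=> u [v [Lu Kv uv]]; exists u, v; split=> //; apply: KK'.
Qed.

Lemma L_empty (r : behavior) (w : seq Sigma) : ~ L r (@lang_empty Sigma) w.
Proof.
elim: r w => [||y|r IHr s IHs|r IHr s IHs|r IHr|r IHr] w //=.
- by case.
- by case=> [/IHr|/IHs].
- by move/(L_mono r (fun v => IHs v)); apply: IHr.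
- by move/(_ (@lang_empty Sigma)); apply=> v [/IHr|].
- by case=> u [v [_ []]].
Qed.

Lemma shuffle_nil_lE (w u : seq Sigma) : shuffle [::] w u -> u = w.
Proof. by move=> H; inversion H. Qed.

Lemma L_sim {s t : behavior} :
  sim s t -> forall (K : lang Sigma) w, L s K w <-> L t K w.
Proof.
elim=> {s t}; rewrite /= /lang_union /lang_empty //; try by move=> *; tauto.
- by move=> r s _ IH K w; split=> /IH.
- by move=> r s t _ rs _ st K w; split=> [/rs/st|/st/rs].
- move=> E s t _ IH.
  elim: E => [|E IHE|E IHE q|q E IHE|E IHE q|q E IHE|E IHE] K w /=.
  + exact: IH K w.
  + split=> Hw X FX; apply: Hw => v [/IHE|] Hv; apply: FX;
      by [left|right|left|right].
  + exact: IHE (L q K) w.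
  + by split; apply: L_mono => v /IHE.
  + by split=> -[/IHE|]; [left|right|left|right].
  + by split=> -[|/IHE]; [left|right|left|right].
  + by split=> -[u [v [/IHE Lu Kv uv]]]; exists u, v.
- move=> K w; split=> [Hw|Kw X FX]; last by apply: FX; right.
  by apply: Hw => v [].
- move=> K w; split=> [[u [v [-> Kv /shuffle_nil_lE ->]]] //|Kw].
  by exists [::], w; split=> //; constructor.
- by move=> r K w; split=> // /L_empty.
- move=> K w; split=> [Hw|Kw X FX]; last by apply: FX; right.
  by apply: Hw => v [].
- by move=> K w; split=> // -[u [v [[]]]].
Qed.

Lemma fork_free_L_conc {r : behavior} (K : lang Sigma) :
  fork_free r -> lang_sub (L (conc r) K) K.
Proof.
elim: r K => [||y|r IHr s IHs|r IHr s IHs|r IHr|r IHr] K //=;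
  try by move=> _ w.
- by case/andP=> fr fs w [/(IHr K fr)|/(IHs K fs)].
- by case/andP=> fr fs w /(IHr _ fr); apply: IHs.
- by move=> fr w; apply=> v [/(IHr K fr)|].
Qed.

End Behaviors.

Theorem lemma9 (Sigma : finType) (r r' : behavior Sigma) :
  sim r r' -> fork_free r' ->
  forall w : seq Sigma, contained (conc (deriv_word w r)) (Eps Sigma).
Proof.
move=> rr' fr' w K u.
move/(L_sim (sim_conc (sim_deriv_word w rr'))).
exact: fork_free_L_conc K (fork_free_deriv_word w fr') u.
Qed.
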